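(* Let $Y,X_1,\dots,X_k$ be Boolean variables and let $\gamma$ be a probabilistic circuit of the form $(Y\wedge\alpha)\vee(\neg Y\wedge\beta)$, where the root OR gate has parameter $\theta_Y$ on the wire from $Y\wedge\alpha$ and $\theta_{\neg Y}$ on the wire from $\neg Y\wedge\beta$, and $\alpha,\beta$ are probabilistic circuits over $X_1,\dots,X_k$ that are structurally identical (the same circuit graph, differing only in their OR-wire parameters $\theta^\alpha_{(n,c)}$ and $\theta^\beta_{(n,c)}$), with all parameters strictly positive. Let $\vee\alpha$ denote the logistic circuit whose root is an OR gate with the single input $\alpha$ carrying parameter $\theta_{\mathit{root}}=\log(\theta_Y/\theta_{\neg Y})$, and in which every OR-gate wire $(n,c)$ of $\alpha$ carries parameter $\log(\theta^\alpha_{(n,c)}/\theta^\beta_{(n,c)})$. Then for every $\mathbf{x}\in\{0,1\}^k$ with $\Pr_\gamma(\mathbf{x})>0$, $\Pr_\gamma(Y=1\mid\mathbf{x})$ equals the probability $\Pr(Y=1\mid\mathbf{x})$ defined by the logistic circuit $\vee\alpha$.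
   Context: A logical circuit over Boolean variables is a rooted directed acyclic graph whose leaves are literals $X$ or $\neg X$ and whose inner nodes are AND gates or OR gates. AND gates are decomposable (inputs mention disjoint variable sets), OR gates are deterministic (for any complete assignment at most one input is satisfied) and smooth (all inputs of an OR gate mention the same variables). A probabilistic circuit is such a circuit with a nonnegative parameter on each input wire of each OR gate, the parameters on the inputs of each OR gate summing to $1$; for a complete assignment $\mathbf{x}$ it defines $\Pr_n(\mathbf{x})=[\mathbf{x}\models n]$ at a leaf, $\Pr_n(\mathbf{x})=\prod_i\Pr_{c_i}(\mathbf{x})$ at an AND gate with children $c_i$, and $\Pr_n(\mathbf{x})=\sum_i\Pr_{c_i}(\mathbf{x})\theta_i$ at an OR gate with inputs $(c_i,\theta_i)$; conditional probabilities are derived from the joint distribution at the root. A logistic circuit is a logical circuit with decomposable AND gates, deterministic OR gates, an OR root, and a real parameter on each OR-gate input wire. For binary $\mathbf{x}$, the flow $f(n,\mathbf{x},c)$ from child $c$ of OR gate $n$ is $1$ if $\mathbf{x}$ satisfies the sentence of $c$ and $0$ otherwise. Weight function: $g_n(\mathbf{x})=0$ at a leaf; $g_n(\mathbf{x})=\sum_i g_{c_i}(\mathbf{x})$ at an AND gate; $g_n(\mathbf{x})=\sum_i f(n,\mathbf{x},c_i)(g_{c_i}(\mathbf{x})+\theta_i)$ at an OR gate with inputs $(c_i,\theta_i)$; with root $r$, the logistic circuit defines $\Pr(Y=1\mid\mathbf{x})=1/(1+\exp(-g_r(\mathbf{x})))$. *)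

From Stdlib Require Import Reals List Bool.
Import ListNotations.
Open Scope R_scope.

(* Circuits as (unfolded) trees.  Leaves are literals over variables indexed
   by nat ([CLit v true] is X_v, [CLit v false] is ~X_v); an OR gate carries a
   list of inputs, each with the parameter (of type T) on its wire. *)
Inductive circ (T : Type) : Type :=
| CLit : nat -> bool -> circ T
| CAnd : list (circ T) -> circ T
| COr : list (T * circ T) -> circ T.
Arguments CLit {T}.
Arguments CAnd {T}.
Arguments COr {T}.

Fixpoint cmap {T U : Type} (f : T -> U) (c : circ T) : circ U :=
  match c with
  | CLit v b => CLit v b
  | CAnd cs => CAnd (map (cmap f) cs)
  | COr ws => COr (map (fun w => let '(p, d) := w in (f p, cmap f d)) ws)
  end.

Fixpoint vars {T : Type} (c : circ T) : list nat :=
  match c with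
  | CLit v _ => [v]
  | CAnd cs => flat_map vars cs
  | COr ws => flat_map (fun w => let '(_, d) := w in vars d) ws
  end.

Fixpoint sat {T : Type} (x : nat -> bool) (c : circ T) : bool :=
  match c with
  | CLit v b => Bool.eqb (x v) b
  | CAnd cs => forallb (sat x) cs
  | COr ws => existsb (fun w => let '(_, d) := w in sat x d) ws
  end.

Definition children {T : Type} (ws : list (T * circ T)) : list (circ T) :=
  map snd ws.

Definition dflt {T : Type} : circ T := CAnd [].

Definition and_decomposable {T : Type} (cs : list (circ T)) : Prop :=
  forall i j v, (i < j < length cs)%nat ->
    In v (vars (nth i cs dflt)) -> ~ In v (vars (nth j cs dflt)).

Definition or_deterministic {T : Type} (ws : list (T * circ T)) : Prop :=
  forall (x : nat -> bool) i j, (i < j < length ws)%nat ->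
    sat x (nth i (children ws) dflt) = true ->
    sat x (nth j (children ws) dflt) = false.

Definition or_smooth {T : Type} (ws : list (T * circ T)) : Prop :=
  forall i j v, (i < length ws)%nat -> (j < length ws)%nat ->
    (In v (vars (nth i (children ws) dflt)) <-> In v (vars (nth j (children ws) dflt))).

Fixpoint all_list (l : list Prop) : Prop :=
  match l with [] => True | P :: l' => P /\ all_list l' end.

Definition sumR (l : list R) : R := fold_right Rplus 0 l.
Definition prodR (l : list R) : R := fold_right Rmult 1 l.

Fixpoint decomposable_deterministic {T : Type} (c : circ T) : Prop :=
  match c with
  | CLit _ _ => True
  | CAnd cs => and_decomposable cs /\ all_list (map decomposable_deterministic cs)
  | COr ws => or_deterministic ws /\
      all_list (map (fun w => let '(_, d) := w in decomposable_deterministic d) ws)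
  end.

Fixpoint smooth {T : Type} (c : circ T) : Prop :=
  match c with
  | CLit _ _ => True
  | CAnd cs => all_list (map smooth cs)
  | COr ws => or_smooth ws /\ all_list (map (fun w => let '(_, d) := w in smooth d) ws)
  end.

Fixpoint pc_params (c : circ R) : Prop :=
  match c with
  | CLit _ _ => True
  | CAnd cs => all_list (map pc_params cs)
  | COr ws => (forall w, In w ws -> 0 <= fst w) /\ sumR (map fst ws) = 1 /\
      all_list (map (fun w => let '(_, d) := w in pc_params d) ws)
  end.

Fixpoint pos_params (c : circ R) : Prop :=
  match c with
  | CLit _ _ => True
  | CAnd cs => all_list (map pos_params cs)
  | COr ws => (forall w, In w ws -> 0 < fst w) /\
      all_list (map (fun w => let '(_, d) := w in pos_params d) ws)
  end.

Definition is_pc (c : circ R) : Prop :=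
  decomposable_deterministic c /\ smooth c /\ pc_params c.

Fixpoint pr (x : nat -> bool) (c : circ R) : R :=
  match c with
  | CLit v b => if Bool.eqb (x v) b then 1 else 0
  | CAnd cs => prodR (map (pr x) cs)
  | COr ws => sumR (map (fun w => let '(t, d) := w in pr x d * t) ws)
  end.

(* Variable Y has index 0; X_1..X_k have indices 1..k. *)
Definition asg (y : bool) (x : nat -> bool) : nat -> bool :=
  fun i => match i with O => y | S _ => x i end.

Definition pr_marg (c : circ R) (x : nat -> bool) : R :=
  pr (asg true x) c + pr (asg false x) c.
Definition pr_cond_Y (c : circ R) (x : nat -> bool) : R :=
  pr (asg true x) c / pr_marg c x.

Fixpoint lg (x : nat -> bool) (c : circ R) : R :=
  match c with
  | CLit _ _ => 0
  | CAnd cs => sumR (map (lg x) cs)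
  | COr ws => sumR (map (fun w => let '(t, d) := w in
                           if sat x d then lg x d + t else 0) ws)
  end.
Definition logistic_prob (c : circ R) (x : nat -> bool) : R :=
  1 / (1 + exp (- lg x c)).

(* gamma = (Y /\ alpha) \/ (~Y /\ beta) where alpha, beta share the graph
   [c : circ (R*R)] with parameters given by first / second components. *)
Definition gamma_of (thY thnY : R) (c : circ (R * R)) : circ R :=
  COr [(thY, CAnd [CLit 0%nat true; cmap fst c]);
       (thnY, CAnd [CLit 0%nat false; cmap snd c])].

Definition lc_of (thY thnY : R) (c : circ (R * R)) : circ R :=
  COr [(ln (thY / thnY), cmap (fun p => ln (fst p / snd p)) c)].

From Stdlib Require Import Reals List Bool Lra Lia.
Import ListNotations.
Open Scope R_scope.

(* On every assignment x satisfying the shared circuit graph c, determinism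
   makes Pr_alpha(x) and Pr_beta(x) products of the parameters along the same
   (unique) satisfied sub-circuit, so Pr_alpha(x) = Pr_beta(x) * exp (g(x)),
   where g is the weight function of the circuit carrying the log-ratios of
   the parameters.  Then
   Pr(Y=1|x) = thY Pr_alpha / (thY Pr_alpha + thnY Pr_beta)
             = 1 / (1 + exp (- (ln (thY / thnY) + g(x)))). *)

Fixpoint circ_ind_nested {T : Type} (P : circ T -> Prop)
  (HL : forall v b, P (CLit v b))
  (HA : forall cs, Forall P cs -> P (CAnd cs))
  (HO : forall ws, Forall (fun w => P (snd w)) ws -> P (COr ws)) (c : circ T) : P c :=
  match c with
  | CLit v b => HL v b
  | CAnd cs => HA cs ((fix F (l : list (circ T)) : Forall P l :=
        match l with [] => Forall_nil _
        | d :: l' => Forall_cons _ (circ_ind_nested P HL HA HO d) (F l') end) cs)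
  | COr ws => HO ws ((fix F (l : list (T * circ T)) : Forall (fun w => P (snd w)) l :=
        match l with [] => Forall_nil _
        | w :: l' => Forall_cons _ (circ_ind_nested P HL HA HO (snd w)) (F l') end) ws)
  end.

Lemma sat_cmap {T U : Type} (f : T -> U) x (c : circ T) : sat x (cmap f c) = sat x c.
Proof.
  induction c using circ_ind_nested; simpl; auto.
  - induction H; simpl; auto. rewrite H, IHForall; auto.
  - induction H as [|[p d] ws Hd _ IH]; simpl in *; auto. rewrite Hd, IH; auto.
Qed.

Lemma vars_cmap {T U : Type} (f : T -> U) (c : circ T) : vars (cmap f c) = vars c.
Proof.
  induction c using circ_ind_nested; simpl; auto.
  - induction H; simpl; auto. rewrite H, IHForall; auto.
  - induction H as [|[p d] ws Hd _ IH]; simpl in *; auto. rewrite Hd, IH; auto.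
Qed.

Lemma pr_unsat x (c : circ R) : sat x c = false -> pr x c = 0.
Proof.
  induction c using circ_ind_nested; simpl.
  - intros Hs; rewrite Hs; auto.
  - induction H as [|d cs Hd _ IH]; simpl; intros Hs; [discriminate|].
    unfold prodR in *; simpl.
    apply andb_false_iff in Hs as [Hs|Hs].
    + rewrite Hd by auto. ring.
    + rewrite IH by auto. ring.
  - induction H as [|[p d] ws Hd _ IH]; simpl in *; intros Hs; [reflexivity|].
    unfold sumR in *; simpl.
    apply orb_false_iff in Hs as [Hs1 Hs2].
    rewrite Hd, IH by auto. ring.
Qed.

Lemma pr_ext_vars x x' (c : circ R) :
  (forall v, In v (vars c) -> x v = x' v) -> pr x c = pr x' c.
Proof.
  induction c using circ_ind_nested; simpl; intros Hv.
  - rewrite Hv; auto.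
  - induction H as [|d cs Hd _ IH]; simpl in *; auto. unfold prodR in *; simpl.
    rewrite Hd, IH; auto; intros; apply Hv, in_or_app; auto.
  - induction H as [|[p d] ws Hd _ IH]; simpl in *; auto. unfold sumR in *; simpl.
    rewrite Hd, IH; auto; intros; apply Hv, in_or_app; auto.
Qed.

Lemma lg_cmap_or_unsat {T : Type} (f : T -> R) x (ws : list (T * circ T)) :
  sat x (COr ws) = false -> lg x (cmap f (COr ws)) = 0.
Proof.
  induction ws as [|[p d] ws IH]; simpl in *; auto.
  intros Hs; apply orb_false_iff in Hs as [Hd Hws].
  unfold sumR in *; simpl. rewrite sat_cmap, Hd, IH by auto. ring.
Qed.

Lemma or_deterministic_tail {T : Type} (w : T * circ T) ws :
  or_deterministic (w :: ws) -> or_deterministic ws.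
Proof.
  intros H x i j Hij. apply (H x (S i) (S j)). simpl; lia.
Qed.

Lemma or_deterministic_head {T : Type} x (w : T * circ T) ws :
  or_deterministic (w :: ws) -> sat x (snd w) = true -> sat x (COr ws) = false.
Proof.
  intros H Hw. destruct (sat x (COr ws)) eqn:E; auto.
  simpl in E. apply existsb_exists in E as [[p d] [Hin Hd]].
  apply (In_nth ws (p, d) (p, dflt)) in Hin as [j [Hj Hn]].
  assert (Hc : nth j (children ws) dflt = d).
  { unfold children. change (@dflt T) with (snd (p, @dflt T)). rewrite map_nth, Hn. auto. }
  specialize (H x 0%nat (S j)). cbn in H. fold (children ws) in H.
  rewrite <- Hc, H in Hd by (auto; lia). discriminate.
Qed.

Definition log_ratio (p : R * R) : R := ln (fst p / snd p).

Definition pr_log_ratio_spec x (c : circ (R * R)) : Prop :=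
  pos_params (cmap fst c) -> pos_params (cmap snd c) ->
  decomposable_deterministic (cmap fst c) -> sat x c = true ->
  pr x (cmap fst c) = pr x (cmap snd c) * exp (lg x (cmap log_ratio c)) /\
  0 < pr x (cmap snd c).

Lemma pr_log_ratio_and x cs :
  Forall (pr_log_ratio_spec x) cs -> pr_log_ratio_spec x (CAnd cs).
Proof.
  unfold pr_log_ratio_spec; simpl.
  induction 1 as [|d cs Hd _ IH]; simpl.
  - intros. unfold prodR, sumR; simpl. rewrite exp_0. lra.
  - intros [P1d P1] [P2d P2] [Dand [Dd D]] Hs.
    apply andb_true_iff in Hs as [Hsd Hs].
    assert (Dtail : and_decomposable (map (cmap fst) cs)).
    { intros i j v Hij. apply (Dand (S i) (S j) v). simpl; lia. }
    destruct (Hd P1d P2d Dd Hsd) as [Ed Ld].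
    destruct (IH P1 P2 (conj Dtail D) Hs) as [E L].
    unfold prodR, sumR in *; simpl. rewrite Ed, E, exp_plus.
    split; [ring | apply Rmult_lt_0_compat; auto].
Qed.

Lemma pr_log_ratio_or x ws :
  Forall (fun w => pr_log_ratio_spec x (snd w)) ws -> pr_log_ratio_spec x (COr ws).
Proof.
  unfold pr_log_ratio_spec; simpl.
  induction 1 as [|[p d] ws Hd _ IH]; simpl in *; intros P1 P2 D Hs; [discriminate|].
  destruct P1 as [P1w [P1d P1]], P2 as [P2w [P2d P2]], D as [Dor [Dd D]].
  unfold sumR in *; simpl in *.
  rewrite !sat_cmap.
  destruct (sat x d) eqn:Ed; simpl in Hs.
  - assert (pa : 0 < fst p) by (apply (P1w (fst p, cmap fst d)); left; auto).
    assert (pb : 0 < snd p) by (apply (P2w (snd p, cmap snd d)); left; auto).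
    destruct (Hd P1d P2d Dd eq_refl) as [E L].
    assert (Hws : sat x (COr ws) = false).
    { rewrite <- (sat_cmap fst). apply (or_deterministic_head x _ _ Dor).
      simpl. rewrite sat_cmap; auto. }
    assert (Hpr1 := pr_unsat x (cmap fst (COr ws))).
    assert (Hpr2 := pr_unsat x (cmap snd (COr ws))).
    assert (Hlg := lg_cmap_or_unsat log_ratio x ws Hws).
    rewrite sat_cmap in Hpr1, Hpr2.
    simpl in Hpr1, Hpr2, Hlg. unfold sumR in Hpr1, Hpr2, Hlg.
    rewrite Hpr1, Hpr2, Hlg, E by exact Hws. unfold log_ratio.
    rewrite !Rplus_0_r, exp_plus, exp_ln by (apply Rdiv_lt_0_compat; auto).
    split; [field; lra | apply Rmult_lt_0_compat; auto].
  - rewrite !pr_unsat by (rewrite sat_cmap; auto).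
    destruct (IH (conj (fun w Hw => P1w w (or_intror Hw)) P1)
                 (conj (fun w Hw => P2w w (or_intror Hw)) P2)
                 (conj (or_deterministic_tail _ _ Dor) D) Hs) as [E L].
    rewrite E, !Rplus_0_l. split; [ring | lra].
Qed.

Lemma pr_log_ratio x c : pr_log_ratio_spec x c.
Proof.
  induction c using circ_ind_nested.
  - intros _ _ _ Hs. simpl in *. rewrite Hs, exp_0. split; lra.
  - apply pr_log_ratio_and; auto.
  - apply pr_log_ratio_or; auto.
Qed.

Lemma pr_gamma_of thY thnY c y x :
  ~ In 0%nat (vars c) ->
  pr (asg y x) (gamma_of thY thnY c) =
  if y then pr x (cmap fst c) * thY else pr x (cmap snd c) * thnY.
Proof.
  intros H0.
  assert (Hasg : forall f : R * R -> R, pr (asg y x) (cmap f c) = pr x (cmap f c)).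
  { intros f. apply pr_ext_vars. intros [|v] Hv; [|reflexivity].
    rewrite vars_cmap in Hv. contradiction. }
  unfold gamma_of, sumR, prodR; simpl. rewrite !Hasg.
  destruct y; simpl; ring.
Qed.

Lemma lg_lc_of thY thnY c x : sat x c = true ->
  lg x (lc_of thY thnY c) = lg x (cmap log_ratio c) + ln (thY / thnY).
Proof.
  intros Hs. unfold lc_of, sumR; simpl.
  fold log_ratio. rewrite sat_cmap, Hs. ring.
Qed.

Lemma ratio_logistic a b g : 0 < a -> 0 < b ->
  a * exp g / (a * exp g + b) = 1 / (1 + exp (- (g + ln (a / b)))).
Proof.
  intros Ha Hb.
  rewrite Ropp_plus_distr, exp_plus, !exp_Ropp, exp_ln by (apply Rdiv_lt_0_compat; auto).
  assert (0 < exp g) by apply exp_pos.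
  assert (0 < a * exp g) by (apply Rmult_lt_0_compat; auto).
  field. repeat split; lra.
Qed.

Theorem proposition4 (k : nat) (c : circ (R * R)) (thY thnY : R) :
  (forall v, In v (vars c) -> (1 <= v <= k)%nat) ->
  is_pc (gamma_of thY thnY c) ->
  0 < thY -> 0 < thnY ->
  pos_params (cmap fst c) -> pos_params (cmap snd c) ->
  forall x : nat -> bool,
    0 < pr_marg (gamma_of thY thnY c) x ->
    pr_cond_Y (gamma_of thY thnY c) x = logistic_prob (lc_of thY thnY c) x.
Proof.
  intros Hvars [[_ [[_ [_ [Hdet _]]] _]] _] HY HnY P1 P2 x Hmarg.
  assert (H0 : ~ In 0%nat (vars c)) by (intros Hin; specialize (Hvars _ Hin); lia).
  unfold pr_cond_Y, pr_marg, logistic_prob in *.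
  rewrite !pr_gamma_of in * by exact H0.
  destruct (sat x c) eqn:Hs.
  - destruct (pr_log_ratio x c P1 P2 Hdet Hs) as [Hratio Hbeta].
    rewrite lg_lc_of, Hratio by exact Hs.
    replace (thY / thnY) with ((thY * pr x (cmap snd c)) / (thnY * pr x (cmap snd c)))
      by (field; lra).
    rewrite <- ratio_logistic by (apply Rmult_lt_0_compat; auto).
    f_equal; ring.
  - rewrite !pr_unsat in Hmarg by (rewrite sat_cmap; exact Hs). lra.
Qed.
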